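(* Let $n\ge 2$ and let $G_n=H_0H_1\cdots H_{n-1}$ be a spiro hexagonal chain of length $n$ with cut-vertices $c_1,\dots,c_{n-1}$, and let $G_{n-1}=H_0H_1\cdots H_{n-2}$. Then $$W(G_n)=W(G_{n-1})+5\,W(G_{n-1},c_{n-1})+45n-18,$$ and for every vertex $c_n$ of $H_{n-1}$ other than $c_{n-1}$, $$W(G_n,c_n)=W(G_{n-1},c_{n-1})+f(c_n),$$ where $f(c_n)=5(n-1)+9$ if $c_n$ is an ortho-vertex of $H_{n-1}$, $f(c_n)=10(n-1)+9$ if $c_n$ is a meta-vertex of $H_{n-1}$, and $f(c_n)=15(n-1)+9$ if $c_n$ is the para-vertex of $H_{n-1}$. Moreover $W(G_1)=27$ and $W(G_1,c_1)=f(c_1)=9$ for any vertex $c_1$ of $H_0$.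
   Context: All graphs are simple and connected; $d(u,v)$ is the shortest-path distance. For a vertex $v$ of $G$, $W(G,v)=\sum_{u\in V(G)}d_G(u,v)$, and the Wiener index is $W(G)=\sum_{\{u,v\}\subseteq V(G)}d_G(u,v)$. A spiro hexagonal chain of length $n$, $G_n=H_0H_1\cdots H_{n-1}$, is a connected graph in which every block is a hexagon (6-cycle) $H_0,\dots,H_{n-1}$, each hexagon has at most two cut-vertices, each cut-vertex is shared by exactly two hexagons, and for $k=1,\dots,n-1$ the hexagons $H_{k-1}$ and $H_k$ share the cut-vertex $c_k$ (so $c_{k+1}\ne c_k$ are distinct vertices of $H_k$). For $k\ge1$, a vertex of $H_k$ at distance $1$, $2$, $3$ from $c_k$ is called an ortho-, meta-, para-vertex of $H_k$, denoted $o_k,m_k,p_k$ respectively (there are two ortho-, two meta- and one para-vertex). $G_1$ is a single hexagon $H_0$. *)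

From mathcomp Require Import all_boot.
Set Implicit Arguments. Unset Strict Implicit. Unset Printing Implicit Defensive.

(* Shortest-path distance: the least m such that there is a walk with m edges
   from u to v (a walk of m edges is u :: q with q an m-tuple forming an e-path).
   For connected graphs this is d(u,v). *)
Definition gdist (T : finType) (e : rel T) (u v : T) : nat :=
  find (fun m => [exists q : m.-tuple T, path e u q && (last u q == v)])
       (iota 0 #|T|).

Definition Wv (T : finType) (e : rel T) (v : T) : nat :=
  \sum_(u : T) gdist e u v.

Definition W (N : nat) (e : rel 'I_N) : nat :=
  \sum_(u < N) \sum_(v < N | u < v) gdist e u v.

(* Each hexagon H_k has local labels 0..5 (cyclic order).  For k >= 1,
   local vertex 0 of H_k is the cut-vertex c_k, which is the vertex of
   H_{k-1} with local label p k; the other local vertices 1..5 of H_k are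
   fresh.  [spiro_g p k i] is the global index of local vertex i of H_k. *)
Fixpoint spiro_g (p : nat -> nat) (k i : nat) : nat :=
  match k with
  | 0 => i
  | k'.+1 => if i == 0 then spiro_g p k' (p k) else 5 * k + i
  end.

Definition spiro (n : nat) (p : nat -> nat) : rel 'I_(5 * n).+1 :=
  fun u v => [exists k : 'I_n, exists i : 'I_6,
     ((val u == spiro_g p k i) && (val v == spiro_g p k (i.+1 %% 6)))
  || ((val v == spiro_g p k i) && (val u == spiro_g p k (i.+1 %% 6)))].

Definition spiro_v (n : nat) (p : nat -> nat) (k i : nat) : 'I_(5 * n).+1 :=
  inord (spiro_g p k i).

(* Validity of the positions for G_n: c_1 is some vertex (label < 6) of H_0;
   for 2 <= k < n, c_k is a vertex of H_{k-1} different from c_{k-1}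
   (label in 1..5). *)
Definition spiro_valid (n : nat) (p : nat -> nat) : Prop :=
  forall k, 0 < k < n -> p k < 6 /\ (1 < k -> 0 < p k).

(* distance inside a hexagon from local vertex 0 to local vertex i (i < 6):
   1 = ortho, 2 = meta, 3 = para *)
Definition hexdist (i : nat) : nat := minn i (6 - i).

Definition spiro_f (n i : nat) : nat :=
  match hexdist i with
  | 1 => 5 * (n - 1) + 9
  | 2 => 10 * (n - 1) + 9
  | _ => 15 * (n - 1) + 9
  end.

Arguments spiro : clear implicits.
Arguments spiro_v : clear implicits.

From mathcomp Require Import all_boot zify.
Set Implicit Arguments. Unset Strict Implicit. Unset Printing Implicit Defensive.

(* G_n is G_(n-1) with a hexagon H_(n-1) glued at the single vertex c_(n-1).
   Hence distances between old vertices do not change, and a shortest path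
   from an old vertex to a new one runs through c_(n-1).  This explicit
   distance is confirmed by the characterisation of graph distance as the
   potential that vanishes at the target, grows by at most one along edges and
   drops by one along some edge everywhere else.  Summing it over the five new
   vertices yields the recurrences; the constants come from the hexagon, whose
   vertex has distance sum 9 to the other five, while the ten pairs among five
   of its vertices have distance sum 18. *)

Section Geodesics.
Variables (T : finType) (e : rel T).

Definition has_walk (u v : T) (m : nat) : bool :=
  [exists q : m.-tuple T, path e u q && (last u q == v)].

Lemma has_walkP u v m :
  reflect (exists q : seq T, [/\ size q = m, path e u q & last u q = v])
          (has_walk u v m).
Proof.
apply: (iffP existsP) => [[q /andP [pq /eqP lq]] | [q [<- pq lq]]].
  by exists (val q); rewrite size_tuple.
by exists (in_tuple q); rewrite /= pq lq eqxx.
Qed.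

Lemma gdistE u v : gdist e u v = find (has_walk u v) (iota 0 #|T|).
Proof. by []. Qed.

Lemma gdist_le_walk u v m : has_walk u v m -> gdist e u v <= m.
Proof.
move=> walk_m; rewrite gdistE; case: (ltnP m #|T|) => hm.
  rewrite leqNgt; apply/negP => /(before_find 0).
  by rewrite nth_iota // add0n walk_m.
by have := find_size (has_walk u v) (iota 0 #|T|); rewrite size_iota; lia.
Qed.

Lemma has_walk_gdist u v : gdist e u v < #|T| -> has_walk u v (gdist e u v).
Proof.
rewrite gdistE => lt_d; have found : has (has_walk u v) (iota 0 #|T|).
  by rewrite has_find size_iota.
by have := nth_find 0 found; rewrite nth_iota // add0n.
Qed.

Lemma gdist_refl u : gdist e u u = 0.
Proof.
by apply/eqP; rewrite -leqn0 gdist_le_walk //; apply/has_walkP; exists [::].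
Qed.

Definition gdist_attained := forall u v : T, has_walk u v (gdist e u v).

Hypothesis attained : gdist_attained.

Lemma gdist_edge x y v : e x y -> gdist e x v <= (gdist e y v).+1.
Proof.
move=> exy; have /has_walkP [q [sq pq lq]] := attained y v.
by rewrite -sq gdist_le_walk //; apply/has_walkP; exists (y :: q); rewrite /= exy.
Qed.

Lemma gdist_step x v : x != v ->
  exists y, e x y /\ (gdist e y v).+1 = gdist e x v.
Proof.
move=> xv; have /has_walkP [[|y q] [sq /= pq lq]] := attained x v.
  by rewrite lq eqxx in xv.
case/andP: pq => exy pq; exists y; split => //.
have le_y : gdist e y v <= size q by apply: gdist_le_walk; apply/has_walkP; exists q.
by have := gdist_edge v exy; rewrite -sq /=; lia.
Qed.

End Geodesics.

Section DistancePotential.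
Variables (T : finType) (e : rel T) (v0 : T) (D : T -> nat).
Hypotheses (D_v0 : D v0 = 0) (D_edge : forall x y, e x y -> D x <= (D y).+1)
  (D_step : forall x, x != v0 -> exists y, e x y /\ (D y).+1 = D x).

Lemma potential_le_walk q u : path e u q -> last u q = v0 -> D u <= size q.
Proof.
elim: q u => [|y q IH] u /=; first by move=> _ ->; rewrite D_v0.
by case/andP=> euy pq lq; have := IH y pq lq; have := D_edge euy; lia.
Qed.

Lemma potential_descent u : exists q : seq T,
  [/\ size q = D u, path e u q, last u q = v0 & uniq (u :: q)].
Proof.
suff: exists q : seq T, [/\ size q = D u, path e u q, last u q = v0,
                            uniq (u :: q) & all (fun x => D x < D u) q].
  by case=> q [*]; exists q.
move Du: (D u) => d; elim: d u Du => [|d IH] u Du.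
  suff -> : u = v0 by exists [::].
  by apply/eqP; apply/negPn/negP => /D_step [y [_]]; lia.
have [y [euy Dy]] : exists y, e u y /\ (D y).+1 = D u.
  by apply: D_step; apply/eqP => uv; rewrite uv D_v0 in Du.
have [q [sq pq lq uq aq]] := IH y ltac:(lia).
have Dq x : x \in q -> D x < d.+1 by move/(allP aq); lia.
exists (y :: q); split => /=; rewrite ?sq ?euy //.
  rewrite -[uniq (y :: q)]/(_ && _) in uq; rewrite uq andbT inE negb_or.
  apply/andP; split; first by apply/eqP => uy; subst; lia.
  by apply/negP => /Dq; lia.
apply/andP; split; first lia.
by apply/allP => x /Dq; lia.
Qed.

Lemma potential_has_walk u : has_walk e u v0 (D u).
Proof.
by have [q [sq pq lq _]] := potential_descent u; apply/has_walkP; exists q.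
Qed.

Lemma gdist_potential u : gdist e u v0 = D u.
Proof.
apply/eqP; rewrite eqn_leq gdist_le_walk ?potential_has_walk //=.
have [q [sq _ _ uq]] := potential_descent u.
have lt_Du : D u < #|T|.
  by have := max_card (mem (u :: q)); rewrite (card_uniqP uq) /= sq.
case: (ltnP (gdist e u v0) #|T|) => [/has_walk_gdist /has_walkP [q' [<- pq' lq']]|].
  exact: potential_le_walk.
by move/(leq_trans lt_Du)/ltnW.
Qed.

End DistancePotential.

Definition hex_dist (i j : nat) : nat := hexdist ((j + 6 - i) %% 6).

Lemma hex_dist_refl i : hex_dist i i = 0.
Proof. by rewrite /hex_dist addKn modnn. Qed.

Lemma hex_dist_edge i j : i < 6 -> j < 6 ->
  (hex_dist i j <= (hex_dist (i.+1 %% 6) j).+1)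
  && (hex_dist (i.+1 %% 6) j <= (hex_dist i j).+1).
Proof. by case: i => [|[|[|[|[|[|]]]]]] //; case: j => [|[|[|[|[|[|]]]]]]. Qed.

Lemma hex_dist_step i j : i < 6 -> j < 6 -> i != j ->
  exists2 k, k < 6 & ((k == i.+1 %% 6) || (i == k.+1 %% 6))
                     && ((hex_dist k j).+1 == hex_dist i j).
Proof.
move=> lt_i lt_j ij.
exists (if hex_dist (i.+1 %% 6) j < hex_dist i j then i.+1 %% 6 else (i + 5) %% 6).
  by case: ifP; rewrite ltn_pmod.
by case: i lt_i ij => [|[|[|[|[|[|]]]]]] //; case: j lt_j => [|[|[|[|[|[|]]]]]].
Qed.

Lemma sum_hex_dist j : j < 6 -> hex_dist 0 j + \sum_(1 <= i < 6) hex_dist i j = 9.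
Proof. by case: j => [|[|[|[|[|[|]]]]]] //; rewrite unlock. Qed.

Lemma sum_hex_dist_cut : \sum_(1 <= i < 6) hex_dist 0 i = 9.
Proof. by rewrite unlock. Qed.

Lemma sum_hex_dist_pairs : \sum_(1 <= i < 6) \sum_(1 <= k < 6 | i < k) hex_dist i k = 18.
Proof. by rewrite unlock. Qed.

Lemma spiro_f_hex_dist n i : 0 < i < 6 -> spiro_f n.+1 i = 5 * n * hex_dist 0 i + 9.
Proof.
move=> /andP [i_gt0 i_lt6]; rewrite /hex_dist subn0 modnDr modn_small //.
by case: i i_gt0 i_lt6 => [|[|[|[|[|[|]]]]]] // _ _; rewrite /spiro_f /hexdist /=; lia.
Qed.

Lemma big_nat_layer m (P : pred nat) (F : nat -> nat) :
  \sum_(0 <= a < (5 * m.+1).+1 | P a) F a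
  = \sum_(0 <= a < (5 * m).+1 | P a) F a + \sum_(1 <= i < 6 | P (5 * m + i)) F (5 * m + i).
Proof.
rewrite (@big_cat_nat _ _ _ (5 * m).+1) //; last lia.
rewrite -add1n big_addn (_ : (5 * m.+1).+1 - 5 * m = 6); last lia.
by congr (_ + _); apply: eq_big => [i | i _]; rewrite addnC.
Qed.

Lemma Wv_sum T (e : rel 'I_T.+1) v : Wv e v = \sum_(0 <= a < T.+1) gdist e (inord a) v.
Proof. by rewrite /Wv big_mkord; apply: eq_bigr => a _; rewrite inord_val. Qed.

Lemma W_sum N (e : rel 'I_N.+1) :
  W e = \sum_(0 <= a < N.+1) \sum_(0 <= b < N.+1 | a < b) gdist e (inord a) (inord b).
Proof.
rewrite /W big_mkord; apply: eq_bigr => a _; rewrite big_mkord.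
by apply: eq_bigr => b _; rewrite !inord_val.
Qed.

Lemma Wv_ord1 (e : rel 'I_1) v : Wv e v = 0.
Proof. by rewrite /Wv big_ord1 (ord1 v) gdist_refl. Qed.

Lemma W_ord1 (e : rel 'I_1) : W e = 0.
Proof. by rewrite /W big_ord1 big_pred0 // => v; rewrite (ord1 v). Qed.

Section SpiroChain.
Variable p : nat -> nat.
Local Notation g := (spiro_g p).

Definition hex_adj (k a b : nat) : bool := [exists i : 'I_6,
  ((a == g k i) && (b == g k (i.+1 %% 6))) || ((b == g k i) && (a == g k (i.+1 %% 6)))].

Definition chain_adj (n a b : nat) : bool := [exists k : 'I_n, hex_adj k a b].

Lemma spiroE n (u v : 'I_(5 * n).+1) : spiro n p u v = chain_adj n u v.
Proof. by []. Qed.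

Lemma chain_adjS n a b : chain_adj n.+1 a b = chain_adj n a b || hex_adj n a b.
Proof.
apply/existsP/orP => [[k adj] | [/existsP [k adj] | adj]].
- have [lt_kn | ge_kn] := ltnP k n; first by left; apply/existsP; exists (Ordinal lt_kn).
  by right; have -> : n = k by have := ltn_ord k; lia.
- by exists (widen_ord (leqnSn n) k).
- by exists ord_max.
Qed.

Lemma hex_adj_labels k i j : i < 6 -> j < 6 ->
  (j == i.+1 %% 6) || (i == j.+1 %% 6) -> hex_adj k (g k i) (g k j).
Proof.
move=> lt_i lt_j /orP [/eqP -> | /eqP ->]; apply/existsP.
  by exists (Ordinal lt_i); rewrite !eqxx.
by exists (Ordinal lt_j); rewrite !eqxx orbT.
Qed.

Lemma spiro_g_new k i : 0 < i -> g k i = 5 * k + i.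
Proof. by case: k => [|k] /=; [lia | case: i]. Qed.

Definition valid_labels (m : nat) : Prop := forall k, 0 < k <= m -> p k < 6.

Lemma spiro_g_le m k i : valid_labels m -> k <= m -> i < 6 -> g k i <= 5 * k + i.
Proof.
move=> labels; elim: k i => [|k IH] [|i] //= le_km lt_i; try lia.
have lt_p : p k.+1 < 6 by apply: labels; lia.
by have := IH _ (ltnW le_km) lt_p; lia.
Qed.

Lemma chain_adj_le m a b : valid_labels m -> chain_adj m a b -> a <= 5 * m /\ b <= 5 * m.
Proof.
move=> labels /existsP [k /existsP [i adj]].
have [lt_km lt_i] := (ltn_ord k, ltn_ord i).
have le_i := spiro_g_le labels (ltnW lt_km) lt_i.
have le_i1 := spiro_g_le labels (ltnW lt_km) (ltn_pmod i.+1 (isT : 0 < 6)).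
by case/orP: adj => /andP [/eqP -> /eqP ->]; lia.
Qed.

Definition chain_dist (m a b : nat) : nat := gdist (spiro m p) (inord a) (inord b).

Lemma chain_dist_refl m a : chain_dist m a a = 0.
Proof. exact: gdist_refl. Qed.

Definition port (m a : nat) : nat := if a <= 5 * m then 0 else a - 5 * m.

Lemma port_new m i : 0 < i -> port m (5 * m + i) = i.
Proof. by move=> i_gt0; rewrite /port ifF ?addKn //; lia. Qed.

Lemma port_lt m (a : 'I_(5 * m.+1).+1) : port m a < 6.
Proof. by rewrite /port; case: ifP => //; have := ltn_ord a; lia. Qed.

Definition from_cut (m b : nat) : nat := if b <= 5 * m then chain_dist m (g m 0) b else 0.

Lemma from_cut_new m i : 0 < i -> from_cut m (5 * m + i) = 0.
Proof. by move=> i_gt0; rewrite /from_cut ifF //; lia. Qed.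

(* Distance from [a] to [b] in G_(m+1): old vertices are those [<= 5 m], the
   new vertex [5 m + i] is local vertex [i] of H_m, and every path between an
   old and a new vertex passes through the cut vertex [g m 0] of H_m, whose
   local label [port] assigns to all old vertices. *)
Definition ext_dist (m a b : nat) : nat :=
  if a <= 5 * m then
    if b <= 5 * m then chain_dist m a b else chain_dist m a (g m 0) + hex_dist 0 (port m b)
  else hex_dist (port m a) (port m b) + from_cut m b.

Section Extension.
Variable m : nat.
Hypotheses (labels : valid_labels m) (attained : gdist_attained (spiro m p)).

Lemma cut_le : g m 0 <= 5 * m.
Proof. by have := spiro_g_le labels (leqnn m) (isT : 0 < 6); rewrite addn0. Qed.

Lemma ext_dist_hex i b : i < 6 -> ext_dist m (g m i) b = hex_dist i (port m b) + from_cut m b.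
Proof.
case: i => [|i] lt_i.
  rewrite /ext_dist /from_cut cut_le; case: ifP => old_b.
    by rewrite /port old_b hex_dist_refl.
  by rewrite chain_dist_refl addn0.
by rewrite spiro_g_new // /ext_dist ifF ?port_new //; lia.
Qed.

Lemma ext_dist_refl b : ext_dist m b b = 0.
Proof.
rewrite /ext_dist /from_cut; case: ifP => old_b; first by rewrite old_b chain_dist_refl.
by rewrite old_b hex_dist_refl.
Qed.

Lemma ext_dist_edge (x y v : 'I_(5 * m.+1).+1) :
  spiro m.+1 p x y -> ext_dist m x v <= (ext_dist m y v).+1.
Proof.
rewrite spiroE chain_adjS => /orP [old_edge | /existsP [i hex_edge]].
  have [old_x old_y] := chain_adj_le labels old_edge.
  have edge : spiro m p (inord x) (inord y) by rewrite spiroE !inordK //; lia.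
  rewrite /ext_dist /chain_dist old_x old_y; case: ifP => _.
    by have := gdist_edge attained (inord v) edge.
  by have := gdist_edge attained (inord (g m 0)) edge; lia.
have /andP [le_i le_i1] := hex_dist_edge (ltn_ord i) (port_lt v).
by case/orP: hex_edge => /andP [/eqP -> /eqP ->]; rewrite !ext_dist_hex ?ltn_pmod //; lia.
Qed.

Lemma ext_dist_step_old (x v : 'I_(5 * m.+1).+1) :
  x <= 5 * m -> (v <= 5 * m) || (x != g m 0 :> nat) -> x != v ->
  exists y, spiro m.+1 p x y /\ (ext_dist m y v).+1 = ext_dist m x v.
Proof.
move=> old_x x_target xv; pose t := if v <= 5 * m then val v else g m 0.
have old_t : t <= 5 * m by rewrite /t; case: ifP => // _; exact: cut_le.
have xt : inord x != inord t :> 'I_(5 * m).+1.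
  apply/eqP => /(congr1 (@nat_of_ord _)); rewrite !inordK // /t; case: ifP x_target => old_v.
    by move=> _ /val_inj xv'; rewrite xv' eqxx in xv.
  by move=> /= /negbTE + x_cut; rewrite x_cut eqxx.
have [y [edge dy]] := gdist_step attained xt.
have old_y : (y : nat) <= 5 * m by have := ltn_ord y.
exists (inord y); split.
  rewrite spiroE chain_adjS inordK; last lia.
  by move: edge; rewrite spiroE inordK // => ->.
rewrite /ext_dist inordK; last lia.
rewrite old_x old_y /chain_dist inord_val; move: dy; rewrite /t.
by case: ifP => _ <-.
Qed.

Lemma ext_dist_step_hex (x v : 'I_(5 * m.+1).+1) j :
  j < 6 -> x = g m j :> nat -> j != port m v ->
  exists y, spiro m.+1 p x y /\ (ext_dist m y v).+1 = ext_dist m x v.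
Proof.
move=> lt_j xj jv; have [k lt_k /andP [adj /eqP dk]] := hex_dist_step lt_j (port_lt v) jv.
have le_k := spiro_g_le labels (leqnn m) lt_k.
exists (inord (g m k)); split.
  by rewrite spiroE chain_adjS inordK ?xj ?hex_adj_labels ?orbT //; lia.
by rewrite inordK ?xj ?ext_dist_hex //; lia.
Qed.

Lemma ext_dist_step (x v : 'I_(5 * m.+1).+1) : x != v ->
  exists y, spiro m.+1 p x y /\ (ext_dist m y v).+1 = ext_dist m x v.
Proof.
move=> xv; have [/andP [old_x x_target] | x_hex] :=
  boolP ((x <= 5 * m) && ((v <= 5 * m) || (x != g m 0 :> nat))).
  exact: ext_dist_step_old.
have [lt_x lt_v] := (ltn_ord x, ltn_ord v).
have /eqP xv' : (x : nat) != v by [].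
apply: (ext_dist_step_hex (j := port m x)); first exact: port_lt.
  move: x_hex; rewrite /port negb_and negb_or negbK; case: ifP => [_ /andP [_ /eqP] //| new_x _].
  by rewrite spiro_g_new; lia.
by move: x_hex; rewrite /port; case: ifP; case: ifP => /=; lia.
Qed.

Lemma gdist_spiroS (u v : 'I_(5 * m.+1).+1) : gdist (spiro m.+1 p) u v = ext_dist m u v.
Proof.
apply: (gdist_potential (D := fun x : 'I_(5 * m.+1).+1 => ext_dist m x v)) => [|x y|x].
- exact: ext_dist_refl.
- exact: ext_dist_edge.
- exact: ext_dist_step.
Qed.

Lemma spiroS_attained : gdist_attained (spiro m.+1 p).
Proof.
move=> u v; rewrite gdist_spiroS.
apply: (potential_has_walk (D := fun x : 'I_(5 * m.+1).+1 => ext_dist m x v)) => [|x].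
  exact: ext_dist_refl.
exact: ext_dist_step.
Qed.

End Extension.

Lemma spiro_attained m : valid_labels m -> gdist_attained (spiro m p).
Proof.
elim: m => [|m IH] labels.
  move=> u v; have -> : u = v by apply: ord_inj; move: (ltn_ord u) (ltn_ord v); lia.
  by rewrite gdist_refl; apply/has_walkP; exists [::].
have labels_m : valid_labels m by move=> k k_le; apply: labels; lia.
exact: spiroS_attained labels_m (IH labels_m).
Qed.

Lemma ext_dist_old m a b : a <= 5 * m -> b <= 5 * m -> ext_dist m a b = chain_dist m a b.
Proof. by move=> old_a old_b; rewrite /ext_dist old_a old_b. Qed.

Lemma ext_dist_old_new m a i : a <= 5 * m -> 0 < i ->
  ext_dist m a (5 * m + i) = chain_dist m a (g m 0) + hex_dist 0 i.
Proof. by move=> old_a i_gt0; rewrite /ext_dist old_a port_new // ifF //; lia. Qed.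

Lemma ext_dist_new m i b : 0 < i -> ext_dist m (5 * m + i) b = hex_dist i (port m b) + from_cut m b.
Proof. by move=> i_gt0; rewrite /ext_dist port_new // ifF //; lia. Qed.

Lemma Wv_chain m b :
  Wv (spiro m p) (inord b) = \sum_(0 <= a < (5 * m).+1) chain_dist m a b.
Proof. exact: Wv_sum. Qed.

Lemma W_chain m :
  W (spiro m p) = \sum_(0 <= a < (5 * m).+1) \sum_(0 <= b < (5 * m).+1 | a < b) chain_dist m a b.
Proof. exact: W_sum. Qed.

Section WienerRecurrence.
Variable m : nat.
Hypothesis labels : valid_labels m.

Lemma Wv_spiroS_ext_dist b : b <= 5 * m.+1 ->
  Wv (spiro m.+1 p) (inord b) = \sum_(0 <= a < (5 * m.+1).+1) ext_dist m a b.
Proof.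
move=> le_b; rewrite Wv_sum; apply: eq_big_nat => a /andP [_ lt_a].
by rewrite (gdist_spiroS labels (spiro_attained labels)) !inordK.
Qed.

Lemma W_spiroS_ext_dist : W (spiro m.+1 p)
  = \sum_(0 <= a < (5 * m.+1).+1) \sum_(0 <= b < (5 * m.+1).+1 | a < b) ext_dist m a b.
Proof.
rewrite W_sum; apply: eq_big_nat => a /andP [_ lt_a].
rewrite big_nat_cond [RHS]big_nat_cond; apply: eq_bigr => b /andP [/andP [_ lt_b] _].
by rewrite (gdist_spiroS labels (spiro_attained labels)) !inordK.
Qed.

Lemma Wv_spiroS_new j : 0 < j < 6 ->
  Wv (spiro m.+1 p) (inord (5 * m + j))
  = Wv (spiro m p) (inord (g m 0)) + 5 * m * hex_dist 0 j + 9.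
Proof.
move=> /andP [j_gt0 lt_j]; rewrite Wv_spiroS_ext_dist; last lia.
have old_part : \sum_(0 <= a < (5 * m).+1) ext_dist m a (5 * m + j)
                = Wv (spiro m p) (inord (g m 0)) + (5 * m).+1 * hex_dist 0 j.
  rewrite Wv_chain -[X in X * hex_dist 0 j]subn0 -sum_nat_const_nat -big_split.
  by apply: eq_big_nat => a /andP [_ lt_a]; apply: ext_dist_old_new.
have new_part : \sum_(1 <= i < 6) ext_dist m (5 * m + i) (5 * m + j)
                = \sum_(1 <= i < 6) hex_dist i j.
  apply: eq_big_nat => i /andP [i_gt0 _].
  by rewrite ext_dist_new // port_new // from_cut_new // addn0.
by rewrite big_nat_layer old_part new_part; have := sum_hex_dist lt_j; lia.
Qed.

Lemma Wv_spiroS_old b : b <= 5 * m ->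
  Wv (spiro m.+1 p) (inord b) = Wv (spiro m p) (inord b) + 5 * chain_dist m (g m 0) b + 9.
Proof.
move=> old_b; rewrite Wv_spiroS_ext_dist; last lia.
have old_part : \sum_(0 <= a < (5 * m).+1) ext_dist m a b = Wv (spiro m p) (inord b).
  by rewrite Wv_chain; apply: eq_big_nat => a /andP [_ lt_a]; apply: ext_dist_old.
have new_part : \sum_(1 <= i < 6) ext_dist m (5 * m + i) b
                = \sum_(1 <= i < 6) (hex_dist i 0 + chain_dist m (g m 0) b).
  by apply: eq_big_nat => i /andP [i_gt0 _]; rewrite ext_dist_new // /port /from_cut old_b.
rewrite big_nat_layer old_part new_part big_split sum_nat_const_nat.
by have := sum_hex_dist (isT : 0 < 6); rewrite hex_dist_refl /=; lia.
Qed.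

Lemma ext_dist_row_old a : a <= 5 * m ->
  \sum_(0 <= b < (5 * m.+1).+1 | a < b) ext_dist m a b
  = \sum_(0 <= b < (5 * m).+1 | a < b) chain_dist m a b + 5 * chain_dist m a (g m 0) + 9.
Proof.
move=> old_a; rewrite big_nat_layer -addnA; congr (_ + _).
  rewrite big_nat_cond [RHS]big_nat_cond; apply: eq_bigr => b /andP [/andP [_ lt_b] _].
  exact: ext_dist_old.
rewrite big_mkcond (eq_big_nat _ _ (F2 := fun i => chain_dist m a (g m 0) + hex_dist 0 i)).
  by rewrite big_split sum_nat_const_nat sum_hex_dist_cut.
by move=> i /andP [i_gt0 _]; rewrite ifT ?ext_dist_old_new //; lia.
Qed.

Lemma ext_dist_row_new i : 0 < i ->
  \sum_(0 <= b < (5 * m.+1).+1 | 5 * m + i < b) ext_dist m (5 * m + i) b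
  = \sum_(1 <= k < 6 | i < k) hex_dist i k.
Proof.
move=> i_gt0; rewrite big_nat_layer big_nat_cond big_pred0 => [|b]; last by lia.
apply: eq_big => [k | k ik]; first exact: ltn_add2l.
have k_gt0 : 0 < k by lia.
by rewrite ext_dist_new // port_new // from_cut_new // addn0.
Qed.

Lemma W_spiroS :
  W (spiro m.+1 p) = W (spiro m p) + 5 * Wv (spiro m p) (inord (g m 0)) + (45 * m.+1 - 18).
Proof.
have old_rows :
    \sum_(0 <= a < (5 * m).+1) \sum_(0 <= b < (5 * m.+1).+1 | a < b) ext_dist m a b
  = \sum_(0 <= a < (5 * m).+1)
      (\sum_(0 <= b < (5 * m).+1 | a < b) chain_dist m a b + 5 * chain_dist m a (g m 0) + 9).
  by apply: eq_big_nat => a /andP [_ lt_a]; apply: ext_dist_row_old.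
have new_rows :
    \sum_(1 <= i < 6) \sum_(0 <= b < (5 * m.+1).+1 | 5 * m + i < b) ext_dist m (5 * m + i) b
  = \sum_(1 <= i < 6) \sum_(1 <= k < 6 | i < k) hex_dist i k.
  by apply: eq_big_nat => i /andP [i_gt0 _]; apply: ext_dist_row_new.
rewrite W_spiroS_ext_dist big_nat_layer old_rows new_rows sum_hex_dist_pairs W_chain Wv_chain.
by rewrite big_split big_split big_distrr /= sum_nat_const_nat; lia.
Qed.

End WienerRecurrence.

End SpiroChain.

Theorem theorem2p1 :
  (forall (p : nat -> nat),
      W (spiro 1 p) = 27 /\ (forall c : 'I_(5 * 1).+1, Wv (spiro 1 p) c = 9))
  /\
  (forall (n : nat) (p : nat -> nat), 2 <= n -> spiro_valid n p ->
     W (spiro n p)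
       = W (spiro (n - 1) p)
         + 5 * Wv (spiro (n - 1) p) (spiro_v (n - 1) p (n - 1) 0)
         + (45 * n - 18)
     /\ (forall i : nat, 0 < i < 6 ->
           Wv (spiro n p) (spiro_v n p (n - 1) i)
             = Wv (spiro (n - 1) p) (spiro_v (n - 1) p (n - 1) 0)
               + spiro_f n i)).
Proof.
split=> [p | [|m] p // n_ge2 valid].
  have labels0 : valid_labels p 0 by move=> k; lia.
  split=> [|c]; first by rewrite W_spiroS // W_ord1 Wv_ord1.
  rewrite -(inord_val c); have [c0 | c_gt0] := posnP c.
    by rewrite c0 Wv_spiroS_old // Wv_ord1 chain_dist_refl.
  have lt_c6 : c < 6 := ltn_ord c.
  by rewrite -[val c]/(5 * 0 + c) Wv_spiroS_new ?c_gt0 // Wv_ord1.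
have labels : valid_labels p m by move=> k k_m; have [] := valid k; lia.
rewrite subSS subn0 /spiro_v; split=> [|i i_range]; first exact: W_spiroS.
have /andP [i_gt0 _] := i_range.
by rewrite spiro_g_new // Wv_spiroS_new // spiro_f_hex_dist // addnA.
Qed.
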